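(* Let $\nu>0$, let $K$ be a smooth positive function with antiderivative $J(u)=\int K(u)\,du$ assumed invertible, and let $B\neq 0$, $D\neq 0$, $Q$ be constants. Suppose $C(u)=D\,K(u)\exp\!\left(\frac{1}{B}J(u)\right)$. Then, on any region of $z>0$, $t>0$ where $Q+\frac{2(1-\nu)}{D}t>0$ and the argument below lies in the range of $J$, $$u(z,t)=J^{-1}\!\left(-2B\ln z+B\ln\left(Q+\frac{2(1-\nu)}{D}t\right)\right)$$ is a solution of $C(u)u_t=z^{-\nu}\left(K(u)z^{\nu}u_z\right)_z$. *)

From Stdlib Require Import Reals.
From Coquelicot Require Import Coquelicot.
Open Scope R_scope.

Definition arg8 (nu B D Q z t : R) : R :=
  -2 * B * ln z + B * ln (Q + 2 * (1 - nu) / D * t).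

Definition u8 (Jinv : R -> R) (nu B D Q z t : R) : R :=
  Jinv (arg8 nu B D Q z t).

Definition C8 (K J : R -> R) (B D : R) (u : R) : R :=
  D * K u * exp (J u / B).

Definition flux8 (K : R -> R) (u : R -> R -> R) (nu t : R) (y : R) : R :=
  K (u y t) * Rpower y nu * Derive (fun y' => u y' t) y.

(** Writing [w = J u], the equation for [u] becomes an equation for [w]: since
    [u_t = w_t / K(u)] and [u_z = w_z / K(u)], the factors [K(u)] cancel, the flux
    [K(u) z^nu u_z = z^nu w_z] equals [-2 B z^(nu-1)], and
    [C(u) u_t = D exp(w/B) w_t].  For [w = -2B ln z + B ln P] with
    [P = Q + 2(1-nu)t/D] one has [exp(w/B) = P / z^2] and [w_t = 2B(1-nu)/(D P)],
    so both sides equal [2B(1-nu)/z^2].  The only analysis needed is the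
    derivative of [J^{-1}], which exists because [J' = K > 0]. *)

From Stdlib Require Import Reals Lra Ranalysis5.
From Coquelicot Require Import Coquelicot.
Open Scope R_scope.

Lemma Rpower_opp_mul_sub2 (a z : R) :
  0 < z -> Rpower z (- a) * Rpower z (a - 2) = / z ^ 2.
Proof.
  intros Hz.
  rewrite <- Rpower_plus.
  replace (- a + (a - 2)) with (- INR 2) by (simpl; ring).
  now rewrite Rpower_Ropp, Rpower_pow.
Qed.

Lemma Rpower_sub1_mul (a y : R) : 0 < y -> Rpower y (a - 1) * y = Rpower y a.
Proof.
  intros Hy.
  rewrite <- (Rpower_1 y) at 2 by exact Hy.
  rewrite <- Rpower_plus; f_equal; ring.
Qed.

Lemma is_derive_arg8_t (nu B D Q z t : R) :
  0 < Q + 2 * (1 - nu) / D * t ->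
  is_derive (fun s => arg8 nu B D Q z s) t
    (B * (2 * (1 - nu) / D) / (Q + 2 * (1 - nu) / D * t)).
Proof.
  intros HP; unfold arg8.
  auto_derive; [exact HP | unfold Rdiv; ring].
Qed.

Lemma is_derive_arg8_z (nu B D Q z t : R) :
  0 < z -> is_derive (fun y => arg8 nu B D Q y t) z (-2 * B / z).
Proof.
  intros Hz; unfold arg8.
  auto_derive; [lra | field; lra].
Qed.

Lemma exp_arg8_div (nu B D Q z t : R) :
  B <> 0 -> 0 < z -> 0 < Q + 2 * (1 - nu) / D * t ->
  exp (arg8 nu B D Q z t / B) = (Q + 2 * (1 - nu) / D * t) / z ^ 2.
Proof.
  intros HB Hz HP.
  replace (arg8 nu B D Q z t / B)
    with (ln (Q + 2 * (1 - nu) / D * t) - (ln z + ln z))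
    by (unfold arg8; field; exact HB).
  set (P := Q + 2 * (1 - nu) / D * t) in *.
  unfold Rminus.
  rewrite exp_plus, exp_Ropp, exp_plus, !exp_ln by assumption.
  field; lra.
Qed.

Section InverseOfAntiderivative.

Variables K J Jinv : R -> R.
Hypothesis K_pos : forall x, 0 < K x.
Hypothesis J_derive : forall x, is_derive J x (K x).
Hypothesis Jinv_J : forall x, Jinv (J x) = x.

Lemma J_increasing : forall a b, a < b -> J a < J b.
Proof.
  intros a b Hab.
  apply (incr_function J m_infty p_infty K); try easy.
  intros x _ _; apply K_pos.
Qed.

Lemma J_continuity_pt : forall x, continuity_pt J x.
Proof.
  intro x; apply derivable_continuous_pt, ex_derive_Reals_0.
  exists (K x); apply J_derive.
Qed.

Lemma J_onto_interval (a b y : R) :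
  a < b -> J a <= y <= J b -> exists x, a <= x <= b /\ J x = y.
Proof.
  intros Hab Hy.
  destruct (f_interv_is_interv J a b y Hab Hy (fun x _ => J_continuity_pt x))
    as [x Hx].
  now exists x.
Qed.

Lemma Jinv_continuity_pt_J (x : R) : continuity_pt Jinv (J x).
Proof.
  apply (continuity_pt_recip_interv J Jinv (x - 1) (x + 1)); try lra.
  - intros a b _ Hab _; now apply J_increasing.
  - intros y Hlo Hhi; unfold comp, id.
    destruct (J_onto_interval (x - 1) (x + 1) y) as [x' [_ <-]]; try lra.
    now rewrite Jinv_J.
  - intros y Hlo Hhi.
    destruct (J_onto_interval (x - 1) (x + 1) y) as [x' [Hx' <-]]; try lra.
    now rewrite Jinv_J.
  - intros a _; apply J_continuity_pt.
  - split; apply J_increasing; lra.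
Qed.

Lemma is_derive_Jinv_J (x : R) : is_derive Jinv (J x) (/ K x).
Proof.
  pose (J_derivable := fun a => ex_derive_Reals_0 J a (ex_intro _ _ (J_derive a))).
  assert (derive_J : forall a pr, derive_pt J a pr = K a).
  { intros a pr; apply derive_pt_eq_0, is_derive_Reals, J_derive. }
  assert (Hbounds : Jinv (J (x - 1)) <= Jinv (J x) <= Jinv (J (x + 1))).
  { rewrite !Jinv_J; lra. }
  assert (Hinv : forall y, J (x - 1) <= y <= J (x + 1) -> comp J Jinv y = id y).
  { intros y Hy; unfold comp, id.
    destruct (J_onto_interval (x - 1) (x + 1) y) as [x' [_ <-]]; try lra.
    now rewrite Jinv_J. }
  pose proof (derivable_pt_lim_recip_interv J Jinv (J (x - 1)) (J (x + 1)) (J x)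
    (fun a _ => J_derivable a) (Jinv_continuity_pt_J x)
    (J_increasing (x - 1) (x + 1) ltac:(lra))
    (conj (J_increasing (x - 1) x ltac:(lra)) (J_increasing x (x + 1) ltac:(lra)))
    Hbounds Hinv) as Hlim.
  rewrite derive_J, Jinv_J in Hlim.
  apply is_derive_Reals.
  replace (/ K x) with (1 / K x) by (field; apply Rgt_not_eq, K_pos).
  apply Hlim, Rgt_not_eq, K_pos.
Qed.

Lemma is_derive_Jinv_comp (g : R -> R) (x g' : R) :
  is_derive g x g' -> (exists y, J y = g x) ->
  is_derive (fun s => Jinv (g s)) x (g' / K (Jinv (g x))).
Proof.
  intros Hg [y Hy].
  rewrite <- Hy, Jinv_J.
  apply (is_derive_comp Jinv g); [|exact Hg].
  rewrite <- Hy; apply is_derive_Jinv_J.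
Qed.

Lemma locally_range_J (x : R) : locally (J x) (fun w => exists y, J y = w).
Proof.
  apply (filter_imp (fun w => J (x - 1) < w < J (x + 1))).
  - intros w Hw.
    destruct (J_onto_interval (x - 1) (x + 1) w) as [y [_ Hy]]; try lra.
    now exists y.
  - apply (open_and _ _ (open_gt _) (open_lt _)).
    split; apply J_increasing; lra.
Qed.

Section CandidateSolution.

Variables (nu B D Q t : R).
Let u := u8 Jinv nu B D Q.

Lemma is_derive_u8_t (z : R) :
  0 < Q + 2 * (1 - nu) / D * t -> (exists x, J x = arg8 nu B D Q z t) ->
  is_derive (fun s => u z s) t
    (B * (2 * (1 - nu) / D) / (Q + 2 * (1 - nu) / D * t) / K (u z t)).
Proof.
  intros HP Hrange.
  apply (is_derive_Jinv_comp (fun s => arg8 nu B D Q z s)); [|exact Hrange].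
  now apply is_derive_arg8_t.
Qed.

Lemma locally_is_derive_u8_z (z : R) :
  0 < z -> (exists x, J x = arg8 nu B D Q z t) ->
  locally z (fun y => 0 < y /\ is_derive (fun y' => u y' t) y (-2 * B / y / K (u y t))).
Proof.
  intros Hz [x Hx].
  assert (Harg : filterlim (fun y => arg8 nu B D Q y t) (locally z) (locally (J x))).
  { rewrite Hx.
    apply (ex_derive_continuous (V := R_NormedModule) (fun y => arg8 nu B D Q y t) z).
    eexists; now apply is_derive_arg8_z. }
  apply (filter_imp (fun y => 0 < y /\ exists x', J x' = arg8 nu B D Q y t)).
  - intros y [Hy Hrange]; split; [exact Hy|].
    apply (is_derive_Jinv_comp (fun y' => arg8 nu B D Q y' t)); [|exact Hrange].
    now apply is_derive_arg8_z.
  - apply filter_and; [apply (open_gt 0 z Hz)|].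
    apply (Harg _ (locally_range_J x)).
Qed.

Lemma flux8_u8_locally (z : R) :
  0 < z -> (exists x, J x = arg8 nu B D Q z t) ->
  locally z (fun y => -2 * B * Rpower y (nu - 1) = flux8 K u nu t y).
Proof.
  intros Hz Hrange.
  eapply filter_imp; [|exact (locally_is_derive_u8_z z Hz Hrange)].
  intros y [Hy Hu_y]; unfold flux8.
  rewrite (is_derive_unique (fun y' : R => u y' t) y _ Hu_y).
  rewrite <- (Rpower_sub1_mul nu y Hy).
  field; split; [lra | apply Rgt_not_eq, K_pos].
Qed.

Lemma is_derive_flux8_u8 (z : R) :
  0 < z -> (exists x, J x = arg8 nu B D Q z t) ->
  is_derive (flux8 K u nu t) z (-2 * B * ((nu - 1) * Rpower z (nu - 2))).
Proof.
  intros Hz Hrange.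
  apply (is_derive_ext_loc _ _ _ _ (flux8_u8_locally z Hz Hrange)).
  apply is_derive_scal, is_derive_Reals.
  replace (nu - 2) with (nu - 1 - 1) by ring.
  now apply derivable_pt_lim_power.
Qed.

End CandidateSolution.

End InverseOfAntiderivative.

Theorem mainTheorem8
  (nu : R) (K J Jinv : R -> R) (B D Q : R)
  (Hnu : 0 < nu)
  (HKsmooth : forall (n : nat) (x : R), ex_derive_n K n x)
  (HKpos : forall x, 0 < K x)
  (HJ : forall x, is_derive J x (K x))
  (HJinv_l : forall x, Jinv (J x) = x)
  (HJinv_r : forall y, (exists x, J x = y) -> J (Jinv y) = y)
  (HB : B <> 0) (HD : D <> 0)
  (z t : R) (Hz : 0 < z) (Ht : 0 < t)
  (HQ : 0 < Q + 2 * (1 - nu) / D * t)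
  (Hrange : exists x, J x = arg8 nu B D Q z t) :
  let u := u8 Jinv nu B D Q in
  ex_derive (fun s => u z s) t /\
  locally z (fun y => ex_derive (fun y' => u y' t) y) /\
  ex_derive (flux8 K u nu t) z /\
  C8 K J B D (u z t) * Derive (fun s => u z s) t
    = Rpower z (- nu) * Derive (flux8 K u nu t) z.
Proof.
  intros u; unfold u.
  pose proof (is_derive_u8_t K J Jinv HKpos HJ HJinv_l nu B D Q t z HQ Hrange) as Hu_t.
  pose proof (locally_is_derive_u8_z K J Jinv HKpos HJ HJinv_l nu B D Q t z Hz Hrange)
    as Hu_z.
  pose proof (is_derive_flux8_u8 K J Jinv HKpos HJ HJinv_l nu B D Q t z Hz Hrange)
    as Hflux.
  split; [eexists; exact Hu_t|].
  split; [revert Hu_z; apply filter_imp; intros y [_ Hy]; eexists; exact Hy|].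
  split; [eexists; exact Hflux|].
  rewrite (is_derive_unique (fun s : R => u8 Jinv nu B D Q z s) t _ Hu_t).
  rewrite (is_derive_unique _ _ _ Hflux).
  unfold C8, u8; rewrite (HJinv_r _ Hrange), exp_arg8_div by assumption.
  replace (Rpower z (- nu) * (-2 * B * ((nu - 1) * Rpower z (nu - 2))))
    with (-2 * B * (nu - 1) * (Rpower z (- nu) * Rpower z (nu - 2))) by ring.
  rewrite Rpower_opp_mul_sub2 by exact Hz.
  set (P := Q + 2 * (1 - nu) / D * t) in *.
  field; repeat split; try lra; apply Rgt_not_eq, HKpos.
Qed.
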